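(* Let $r_0\ge r_1\ge0$ be integers and $k\ge 2r_0+1$. Let $T$ be a triangle, $e\in\Delta_1(T)$ an edge with a fixed unit normal $n_e$. Then the space $\mathbb P_k\big(D(e,r_1)\setminus D(\Delta_0(e),r_0)\big)$ is uniquely determined by the values $$\int_e\frac{\partial^\beta u}{\partial n_e^\beta}\lambda_e^{\alpha_e}\,\mathrm ds,\qquad \alpha_e\in\mathbb T^1_{k-2(r_0+1)+\beta},\ \beta=0,1,\dots,r_1.$$
   Context: $T$ has vertices $\texttt v_0,\texttt v_1,\texttt v_2$ and barycentric coordinates $\lambda_0,\lambda_1,\lambda_2$. $\mathbb N$ includes $0$; $\mathbb T^d_j=\{\alpha\in\mathbb N^{d+1}:\sum_i\alpha_i=j\}$ (empty if $j<0$); $\lambda^\alpha=\prod_i\lambda_i^{\alpha_i}$; for $S\subseteq\mathbb T^2_k$, $\mathbb P_k(S)=\mathrm{span}\{\lambda^\alpha:\alpha\in S\}$. A face $f$ (vertex or edge) is identified with its vertex index set, $f^*$ is the complement in $\{0,1,2\}$, $D(f,r)=\{\alpha\in\mathbb T^2_k:\sum_{i\in f^*}\alpha_i\le r\}$, and $D(\Delta_0(e),r_0)$ is the union of $D(\texttt v,r_0)$ over the two vertices $\texttt v$ of $e$. If $e$ has vertices $\texttt v_{e(0)},\texttt v_{e(1)}$, then for $\alpha_e=(a,b)$, $\lambda_e^{\alpha_e}=\lambda_{e(0)}^a\lambda_{e(1)}^b$. ''Uniquely determined'' means the linear map from the space to the listed values is a bijection. *)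

From Stdlib Require Import Reals.
From Coquelicot Require Import Coquelicot.
Open Scope R_scope.

Definition pt := (R * R)%type.
Definition psub (a b : pt) : pt := (fst a - fst b, snd a - snd b).
Definition det2 (a b : pt) : R := fst a * snd b - snd a * fst b.

(* The triangle T has vertices v 0, v 1, v 2 (only indices 0,1,2 are used). *)
Definition nondegenerate (v : nat -> pt) : Prop :=
  det2 (psub (v 1%nat) (v 0%nat)) (psub (v 2%nat) (v 0%nat)) <> 0.

(* barycentric coordinate lambda_l (l = 0,1,2): ratio of signed areas *)
Definition bary (v : nat -> pt) (l : nat) (x : pt) : R :=
  det2 (psub (v ((l + 1) mod 3)%nat) x) (psub (v ((l + 2) mod 3)%nat) x) /
  det2 (psub (v ((l + 1) mod 3)%nat) (v l)) (psub (v ((l + 2) mod 3)%nat) (v l)).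

(* multi-indices alpha in N^3, alpha = (alpha_0, alpha_1, alpha_2) *)
Definition tri (a0 a1 a2 : nat) : nat -> nat :=
  fun l => match l with 0%nat => a0 | 1%nat => a1 | _ => a2 end.

Definition bmono (v : nat -> pt) (al : nat -> nat) (x : pt) : R :=
  bary v 0 x ^ al 0%nat * bary v 1 x ^ al 1%nat * bary v 2 x ^ al 2%nat.

(* a face f is given by its vertex index set (a boolean predicate on {0,1,2});
   D(f,r) = { alpha in T^2_k : sum_{i in f^*} alpha_i <= r }  (the T^2_k part
   is imposed separately in the span below) *)
Definition inD (f : nat -> bool) (r : nat) (al : nat -> nat) : Prop :=
  ((if f 0%nat then 0 else al 0%nat) + (if f 1%nat then 0 else al 1%nat)
   + (if f 2%nat then 0 else al 2%nat) <= r)%nat.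

Definition vface (i : nat) : nat -> bool := fun l => Nat.eqb l i.
Definition eface (i j : nat) : nat -> bool := fun l => orb (Nat.eqb l i) (Nat.eqb l j).

Definition Sset (i j r0 r1 : nat) (al : nat -> nat) : Prop :=
  inD (eface i j) r1 al /\ ~ (inD (vface i) r0 al \/ inD (vface j) r0 al).

(* P_k(S) = span{ lambda^alpha : alpha in S, alpha in T^2_k } *)
Definition inPk (v : nat -> pt) (k : nat) (S : (nat -> nat) -> Prop) (u : pt -> R) : Prop :=
  exists c : nat -> nat -> nat -> R,
    (forall a0 a1 a2, (a0 + a1 + a2 = k)%nat -> ~ S (tri a0 a1 a2) -> c a0 a1 a2 = 0) /\
    forall x, u x =
      sum_f_R0 (fun a0 => sum_f_R0 (fun a1 => sum_f_R0 (fun a2 =>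
        if Nat.eqb (a0 + a1 + a2) k then c a0 a1 a2 * bmono v (tri a0 a1 a2) x else 0)
        k) k) k.

Definition unit_normal (v : nat -> pt) (i j : nat) (n : pt) : Prop :=
  let d := psub (v j) (v i) in
  fst n * fst d + snd n * snd d = 0 /\ fst n ^ 2 + snd n ^ 2 = 1.

Definition epar (v : nat -> pt) (i j : nat) (t : R) : pt :=
  (fst (v i) + t * (fst (v j) - fst (v i)), snd (v i) + t * (snd (v j) - snd (v i))).

Definition elen (v : nat -> pt) (i j : nat) : R :=
  sqrt ((fst (v j) - fst (v i)) ^ 2 + (snd (v j) - snd (v i)) ^ 2).

Definition dnormal (u : pt -> R) (n : pt) (beta : nat) (x : pt) : R :=
  Derive_n (fun s => u (fst x + s * fst n, snd x + s * snd n)) beta 0.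

Definition dof (v : nat -> pt) (i j : nat) (n : pt) (u : pt -> R)
    (beta a b : nat) : R :=
  elen v i j * RInt (fun t => dnormal u n beta (epar v i j t)
                       * bary v i (epar v i j t) ^ a * bary v j (epar v i j t) ^ b) 0 1.

(* Let l be the vertex opposite to e, and t, s the coordinates along e and along n_e.  On the
   line through the point t of e in the direction n_e, lambda_l = d s with d <> 0, so lambda^alpha
   has no s^beta term for beta < alpha_l and its s^(alpha_l) coefficient is
   d^(alpha_l) (1 - t)^(alpha_i) t^(alpha_j).  The multi-indices of D(e,r1) \ D(Delta_0(e),r0)
   correspond to the dof indices (beta, a, b) through beta = alpha_l,
   alpha_i = a + r0 + 1 - beta and alpha_j = b + r0 + 1 - beta, so the dof map is block
   triangular in beta.  Its diagonal block sends the coefficients of q = sum c_ab (1-t)^a t^b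
   to the moments of w q (1-t)^a t^b on [0, 1], where w = ((1 - t) t)^(r0 + 1 - beta) > 0 on
   (0, 1); if they all vanish then the integral of w q^2 vanishes, so q = 0 and every c_ab = 0.
   An injective linear endomorphism of a finite-dimensional space is bijective. *)

From Pilot Require Import Defs.
From Stdlib Require Import Reals FunctionalExtensionality.
From Coquelicot Require Import Coquelicot.
From HB Require Import structures.
From mathcomp Require Import all_boot all_order all_algebra.
From mathcomp Require Import Rstruct ring lra zify.
Set Implicit Arguments.
Unset Strict Implicit.
Unset Printing Implicit Defensive.

Import Order.TTheory GRing.Theory Num.Theory.

Local Open Scope ring_scope.

(** * Real polynomials on the unit interval *)

Lemma is_derive_horner (p : {poly R}) (x : R) : is_derive (horner p) x (p^`()).[x].
Proof.
elim/poly_ind: p x => [|p c IHp] x.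
  rewrite deriv0 horner0.
  apply: (is_derive_ext (fun=> (0 : R))); last exact: is_derive_const.
  by move=> t; rewrite horner0.
rewrite derivMXaddC !hornerE.
apply: (is_derive_ext (fun t => p.[t] * t + c)) => [t|]; first by rewrite !hornerE.
have := is_derive_plus _ _ x _ _ (is_derive_mult _ _ x _ _ (IHp x) (is_derive_id x) Rmult_comm)
  (is_derive_const c x).
by rewrite /plus /mult /one /zero /= !RealsE mulr1 addr0 addrC.
Qed.

Lemma continuous_horner (p : {poly R}) (x : R) : continuous (horner p) x.
Proof. exact: ex_derive_continuous (ex_intro _ _ (is_derive_horner p x)). Qed.

Lemma ex_RInt_horner (p : {poly R}) (a b : R) : ex_RInt (horner p) a b.
Proof. by apply: ex_RInt_continuous => x _; apply: continuous_horner. Qed.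

Lemma Derive_n_horner (p : {poly R}) (m : nat) : Derive_n (horner p) m = horner p^`(m).
Proof.
elim: m => [|m IHm]; first by apply: functional_extensionality => s; rewrite derivn0.
apply: functional_extensionality => s.
rewrite [LHS]/= IHm derivnS.
exact: is_derive_unique (is_derive_horner _ s).
Qed.

Lemma Derive_n_horner0 (p : {poly R}) (m : nat) : Derive_n (horner p) m 0 = p`_m * m`!%:R.
Proof. by rewrite Derive_n_horner horner_coef0 coef_derivn addn0 ffactnn mulr_natr. Qed.

Definition int01 (p : {poly R}) : R := RInt (horner p) 0 1.

Lemma int01_is_linear : linear_for *%R int01.
Proof.
move=> a p q; rewrite /int01.
rewrite (RInt_ext _ (fun t => plus (scal a p.[t]) q.[t])); last by move=> t _; rewrite !hornerE.
rewrite RInt_plus ?RInt_scal //; try apply: ex_RInt_scal; exact: ex_RInt_horner.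
Qed.

HB.instance Definition _ := GRing.isLinear.Build R {poly R} R *%R int01 int01_is_linear.

Lemma RInt_gt0_at (f : R -> R) (a b t : R) :
  (forall x, continuous f x) -> (forall x, a < x < b -> 0 <= f x) ->
  a < t < b -> 0 < f t -> 0 < RInt f a b.
Proof.
move=> f_cont f_ge0 /andP[a_t t_b] ft_gt0.
have ex_f c d : ex_RInt f c d by apply: ex_RInt_continuous => x _; apply: f_cont.
have int_ge0 (c d : R) : a <= c -> c <= d -> d <= b -> 0 <= RInt f c d.
  move=> a_c c_d d_b; apply/RleP/RInt_ge_0; [exact/RleP|exact: ex_f|].
  by move=> x [/RltP c_x /RltP x_d]; apply/RleP/f_ge0; apply/andP; split; lra.
have [del near_t] : locally t (fun x => ball (f t) (mkposreal _ (RltP ft_gt0)) (f x)).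
  exact: (proj1 (filterlim_locally _ _) (f_cont t)).
have del_gt0 : 0 < pos del by apply/RltP; apply: cond_pos.
pose h := Num.min (pos del / 2) (Num.min ((t - a) / 2) ((b - t) / 2)).
have h_gt0 : 0 < h by rewrite !lt_min; lra.
have [h_del h_a h_b] : [/\ h <= pos del / 2, h <= (t - a) / 2 & h <= (b - t) / 2].
  by rewrite /h !ge_min !lexx !orbT.
pose lo := t - h; pose hi := t + h.
have mid_gt0 : 0 < RInt f lo hi.
  apply/RltP/RInt_gt_0; [apply/RltP; rewrite /lo /hi; lra| |by move=> x _; apply: f_cont].
  move=> x [/RltP lo_x /RltP x_hi]; rewrite /lo /hi in lo_x x_hi; apply/RltP.
  have /near_t : ball t del x.
    apply/RltP; rewrite /ball /= /AbsRing_ball /abs /minus /plus /Hierarchy.opp /= !RealsE.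
    by rewrite ltr_norml; lra.
  rewrite /ball /= /AbsRing_ball /abs /minus /plus /Hierarchy.opp /= => /RltP.
  by rewrite !RealsE ltr_norml; lra.
rewrite -(RInt_Chasles f a lo b) ?ex_f // -(RInt_Chasles f lo hi b) ?ex_f //.
have left_ge0 : 0 <= RInt f a lo by apply: int_ge0; rewrite /lo; lra.
have right_ge0 : 0 <= RInt f hi b by apply: int_ge0; rewrite /hi; lra.
rewrite /Hierarchy.plus /= !RealsE; lra.
Qed.

Lemma poly_eq0_on01 (q : {poly R}) : (forall t, 0 < t < 1 -> q.[t] = 0) -> q = 0.
Proof.
move=> q0; apply/eqP/negPn/negP => q_neq0.
suff : (size [seq (m.+2)%:R^-1 : R | m <- iota 0 (size q)] < size q)%N.
  by rewrite size_map size_iota ltnn.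
apply: max_poly_roots q_neq0 _ _.
  apply/allP => _ /mapP[m _ ->]; apply/rootP/q0.
  by rewrite invr_gt0 ltr0n /= invf_lt1 ?ltr0n // ltr1n.
by rewrite map_inj_uniq ?iota_uniq // => m m' /invr_inj/eqP; rewrite eqr_nat => /eqP[].
Qed.

Lemma int01_mul_sqr_eq0 (w q : {poly R}) :
  (forall t, 0 < t < 1 -> 0 < w.[t]) -> int01 (w * q ^+ 2) = 0 -> q = 0.
Proof.
move=> w_gt0 int_eq0; apply: poly_eq0_on01 => t t01; apply/eqP/negPn/negP => qt_neq0.
suff : 0 < int01 (w * q ^+ 2) by rewrite int_eq0 ltxx.
apply: (RInt_gt0_at (t := t)); rewrite ?ltr01 //.
- exact: continuous_horner.
- by move=> x x01; rewrite hornerM horner_exp mulr_ge0 ?sqr_ge0 // ltW // w_gt0.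
- by rewrite hornerM horner_exp mulr_gt0 ?w_gt0 // exprn_even_gt0.
Qed.

Lemma int01_weighted_orth_eq0 (I : finType) (P : pred I) (w : {poly R})
    (B : I -> {poly R}) (c : I -> R) :
  (forall t, 0 < t < 1 -> 0 < w.[t]) ->
  (forall y, P y -> int01 (w * (\sum_(z | P z) c z *: B z) * B y) = 0) ->
  \sum_(z | P z) c z *: B z = 0.
Proof.
set q := \sum_(z | P z) _ => w_gt0 orth; apply: (int01_mul_sqr_eq0 (q := q) w_gt0).
rewrite expr2 mulrA {2}/q mulr_sumr linear_sum big1 // => y Py.
by rewrite -scalerAr linearZ /= orth ?mulr0.
Qed.

Lemma subX_Xn_free (K : comNzRingType) (I : finType) (P : pred I) (e f : I -> nat)
    (c : I -> K) :
  {in P &, injective e} -> \sum_(y | P y) c y *: ((1 - 'X) ^+ f y * 'X ^+ e y) = 0 ->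
  {in P, forall y, c y = 0}.
Proof.
move=> e_inj sum0.
suff c0 m : forall y, P y -> e y = m -> c y = 0 by move=> y Py; exact: c0 _ y Py erefl.
elim/ltn_ind: m => m IHm y Py ey.
have := congr1 (coefp m) sum0; rewrite linear_sum linear0 (bigD1 y) //= big1 ?addr0.
  by rewrite coefZ coefMXn -ey ltnn subnn -horner_coef0 horner_exp !hornerE subr0 expr1n mulr1.
move=> z /andP[Pz /eqP z_neq_y]; rewrite coefZ coefMXn.
case: ltnP => [_|]; first by rewrite mulr0.
rewrite leq_eqVlt => /predU1P[ez_eq_m|ez_lt_m].
- by case: z_neq_y; apply: e_inj; rewrite ?ez_eq_m.
- by rewrite (IHm (e z)) ?mul0r.
Qed.

(** * Vertices and barycentric coordinates *)

Lemma eqbE (a b : nat) : Nat.eqb a b = (a == b).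
Proof. by apply/PeanoNat.Nat.eqb_spec/eqP. Qed.

Definition third (i j : nat) : nat := 3 - (i + j).

Section EdgeIndices.

Variables i j : nat.
Hypotheses (i_lt3 : (i < 3)%N) (j_lt3 : (j < 3)%N) (i_neq_j : i != j).

Lemma third_spec : [/\ (third i j < 3)%N, third i j != i & third i j != j].
Proof. by case: i i_lt3 i_neq_j => [|[|[|?]]] // _; case: j j_lt3 => [|[|[|?]]]. Qed.

Lemma big_ord3_edge (T : Type) (idx : T) (op : Monoid.com_law idx) (F : nat -> T) :
  \big[op/idx]_(m < 3) F m = op (op (F i) (F j)) (F (third i j)).
Proof.
have perm_ijl : perm_eq (iota 0 3) [:: i; j; third i j].
  by case: i i_lt3 i_neq_j => [|[|[|?]]] // _; case: j j_lt3 => [|[|[|?]]].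
rewrite -(big_mkord xpredT) /index_iota subn0 (perm_big _ perm_ijl) /=.
by rewrite !big_cons big_nil Monoid.mulm1 Monoid.mulmA.
Qed.

End EdgeIndices.

Section Triangle.

Variable v : nat -> pt.

Definition area2 : R := det2 (psub (v 1) (v 0)) (psub (v 2) (v 0)).

Lemma baryE m x : (m < 3)%N ->
  bary v m x = det2 (psub (v ((m + 1) %% 3)) x) (psub (v ((m + 2) %% 3)) x) / area2.
Proof.
rewrite /bary /area2 /det2 /psub; case: m => [|[|[|?]]] //= _; rewrite !RealsE; congr (_ / _); ring.
Qed.

Definition dbary (m : nat) (n : pt) : R := bary v m n - bary v m (0, 0).

Lemma bary_line m x n s :
  bary v m (x.1 + s * n.1, x.2 + s * n.2) = bary v m x + s * dbary m n.
Proof. by rewrite /dbary /bary /det2 /psub /= !RealsE; ring. Qed.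

Lemma bary_epar i j m t :
  bary v m (epar v i j t) = (1 - t) * bary v m (v i) + t * bary v m (v j).
Proof. by rewrite /bary /epar /det2 /psub /= !RealsE; ring. Qed.

Hypothesis v_nondeg : Defs.nondegenerate v.

Lemma area2_neq0 : area2 != 0.
Proof. by apply/eqP. Qed.

Lemma bary_vertex m p : (m < 3)%N -> (p < 3)%N -> bary v m (v p) = (m == p)%:R.
Proof.
move=> m_lt3 p_lt3; rewrite baryE //; have := area2_neq0.
rewrite /area2 /det2 /psub.
case: m m_lt3 => [|[|[|?]]] //= _; case: p p_lt3 => [|[|[|?]]] //= _ D_neq0;
  by rewrite !RealsE; field.
Qed.

Section Edge.

Variables (i j : nat).
Hypotheses (i_lt3 : (i < 3)%N) (j_lt3 : (j < 3)%N) (i_neq_j : i != j).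

Lemma bary_epar_edge m t : (m < 3)%N ->
  bary v m (epar v i j t) = if m == i then 1 - t else if m == j then t else 0.
Proof.
move=> m_lt3; rewrite bary_epar !bary_vertex //.
have [->|_] := eqVneq m i; first by rewrite (negbTE i_neq_j) mulr1 mulr0 addr0.
by case: eqP; rewrite mulr0 add0r ?mulr1 ?mulr0.
Qed.

Lemma elen_gt0 : 0 < elen v i j.
Proof.
rewrite /elen !RealsE sqrtr_gt0 lt_def addr_ge0 ?sqr_ge0 // andbT.
rewrite paddr_eq0 ?sqr_ge0 // !sqrf_eq0 !subr_eq0; apply/negP => /andP[/eqP vx /eqP vy].
have : bary v i (v j) = bary v i (v i).
  by rewrite [v j]surjective_pairing vx vy -surjective_pairing.
by rewrite !bary_vertex // eqxx (negbTE i_neq_j) => /eqP; rewrite eq_sym oner_eq0.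
Qed.

Lemma dbary_third_area2 n :
  (dbary (third i j) n * area2) ^+ 2 = det2 n (psub (v j) (v i)) ^+ 2.
Proof.
have [l_lt3 _ _] := third_spec i_lt3 j_lt3 i_neq_j.
have D_neq0 := area2_neq0.
rewrite /dbary !baryE //; move: l_lt3.
case: i i_lt3 i_neq_j => [|[|[|?]]] // _; case: j j_lt3 => [|[|[|?]]] //= _ _ _;
  by rewrite /det2 /psub /= !RealsE; field.
Qed.

Lemma det2_unit_normal n :
  unit_normal v i j n -> det2 n (psub (v j) (v i)) ^+ 2 = elen v i j ^+ 2.
Proof.
rewrite /unit_normal /elen /det2 /psub !RealsE /= => -[n_perp n_unit].
rewrite sqr_sqrtr ?addr_ge0 ?sqr_ge0 //.
set d1 := (v j).1 - (v i).1; set d2 := (v j).2 - (v i).2.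
have lagrange : (n.1 * d2 - n.2 * d1) ^+ 2 =
    (n.1 ^+ 2 + n.2 ^+ 2) * (d1 ^+ 2 + d2 ^+ 2) - (n.1 * d1 + n.2 * d2) ^+ 2 by ring.
by rewrite lagrange n_perp n_unit mul1r expr0n subr0.
Qed.

Lemma dbary_third_neq0 n : unit_normal v i j n -> dbary (third i j) n != 0.
Proof.
move=> n_normal; apply: contraTneq elen_gt0 => dbary0.
have := dbary_third_area2 n; rewrite dbary0 mul0r expr0n det2_unit_normal //=.
by move/eqP; rewrite eq_sym sqrf_eq0 => /eqP ->; rewrite ltxx.
Qed.

End Edge.

End Triangle.

(** * Restriction to the lines normal to the edge *)

Section NormalLines.

Variables (v : nat -> pt) (i j : nat) (n : pt).
Hypotheses (v_nondeg : Defs.nondegenerate v) (i_lt3 : (i < 3)%N) (j_lt3 : (j < 3)%N)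
  (i_neq_j : i != j).

Let l := third i j.

Definition normal_line (t s : R) : pt :=
  ((epar v i j t).1 + s * n.1, (epar v i j t).2 + s * n.2).

(* [P : {poly {poly R}}] encodes the polynomial of two variables whose main variable is the
   normal coordinate s and whose coefficients are polynomials in the edge parameter t. *)
Definition normal_restriction (u : pt -> R) (P : {poly {poly R}}) : Prop :=
  forall t s, u (normal_line t s) = (map_poly (horner_eval t) P).[s].

Definition edge_poly (m : nat) : {poly R} :=
  if m == i then 1 - 'X else if m == j then 'X else 0.

Definition line_factor (m : nat) : {poly {poly R}} :=
  (edge_poly m)%:P + (dbary v m n)%:P%:P * 'X.

Definition line_poly (al : nat -> nat) : {poly {poly R}} :=
  \prod_(m < 3) line_factor m ^+ al m.

Lemma bary_normal_line m t s : (m < 3)%N ->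
  bary v m (normal_line t s) = (edge_poly m).[t] + dbary v m n * s.
Proof.
move=> m_lt3; rewrite bary_line bary_epar_edge // /edge_poly mulrC.
by case: ifP => _; [|case: ifP => _]; rewrite !hornerE.
Qed.

Lemma horner_line_factor m t s :
  (map_poly (horner_eval t) (line_factor m)).[s] = (edge_poly m).[t] + dbary v m n * s.
Proof.
rewrite /line_factor rmorphD rmorphM /= !map_polyC map_polyX /= !horner_evalE !hornerE.
by rewrite mulrC.
Qed.

Lemma bmono_normal_line al : normal_restriction (bmono v al) (line_poly al).
Proof.
move=> t s; rewrite /line_poly rmorph_prod horner_prod !big_ord_recr big_ord0 /= mul1r.
rewrite /bmono !RealsE !bary_normal_line //.
by congr (_ * _ * _); rewrite rmorphXn horner_exp; congr (_ ^+ _);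
  symmetry; apply: horner_line_factor.
Qed.

Lemma line_poly_split al : line_poly al =
  (dbary v l n ^+ al l)%:P%:P * ('X ^+ al l * (line_factor i ^+ al i * line_factor j ^+ al j)).
Proof.
have [_ l_neq_i l_neq_j] := third_spec i_lt3 j_lt3 i_neq_j.
rewrite /line_poly (big_ord3_edge i_lt3 j_lt3 i_neq_j _ (fun m => line_factor m ^+ al m)).
rewrite {3}/line_factor /edge_poly -/l.
rewrite (negbTE l_neq_i) (negbTE l_neq_j) polyC0 add0r exprMn -!rmorphXn /=.
by rewrite mulrC -mulrA.
Qed.

Lemma line_poly_coef_lt al b : (b < al l)%N -> (line_poly al)`_b = 0.
Proof. by move=> b_lt; rewrite line_poly_split coefCM coefXnM b_lt mulr0. Qed.

Lemma line_poly_coef_normal al :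
  (line_poly al)`_(al l) = (dbary v l n ^+ al l)%:P * ((1 - 'X) ^+ al i * 'X ^+ al j).
Proof.
rewrite line_poly_split coefCM coefXnM ltnn subnn coef0M.
rewrite -!horner_coef0 !horner_exp /line_factor !hornerE /edge_poly eqxx.
by rewrite eq_sym (negbTE i_neq_j) eqxx.
Qed.

Lemma dnormal_epar (u : pt -> R) (P : {poly {poly R}}) : normal_restriction u P ->
  forall t b, dnormal u n b (epar v i j t) = (P`_b).[t] * b`!%:R.
Proof.
move=> uP t b; rewrite /dnormal (Derive_n_ext _ (horner (map_poly (horner_eval t) P))).
  by rewrite Derive_n_horner0 coef_map.
by move=> s; apply: uP.
Qed.

Lemma dof_normal_restriction (u : pt -> R) (P : {poly {poly R}}) :
    normal_restriction u P -> forall b a c,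
  dof v i j n u b a c = elen v i j * (b`!%:R * int01 (P`_b * ((1 - 'X) ^+ a * 'X ^+ c))).
Proof.
move=> uP b a c; rewrite /dof /int01 RmultE; congr (_ * _).
set Q := P`_b * _.
transitivity (RInt (fun t => scal (b`!%:R : R) Q.[t]) 0 1); last first.
  by rewrite RInt_scal //; exact: ex_RInt_horner.
apply: RInt_ext => t _; rewrite (dnormal_epar uP) !bary_epar_edge //.
rewrite eqxx eq_sym (negbTE i_neq_j) eqxx.
rewrite !RealsE /Q !hornerE /=; change (scal ?k ?x) with (k * x); ring.
Qed.

(** * The degrees of freedom *)

Section Dofs.

Variables r0 r1 k : nat.
Hypotheses (n_normal : unit_normal v i j n) (r1_le_r0 : (r1 <= r0)%N).

Let l_spec := third_spec i_lt3 j_lt3 i_neq_j.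

Definition mindex := ('I_k.+1 * 'I_k.+1 * 'I_k.+1)%type.

Definition alpha (x : mindex) : nat -> nat := tri x.1.1 x.1.2 x.2.

Lemma sum_alpha (x : mindex) : (x.1.1 + x.1.2 + x.2 = alpha x i + alpha x j + alpha x l)%N.
Proof.
by rewrite -(big_ord3_edge i_lt3 j_lt3 i_neq_j _ (alpha x)) !big_ord_recr big_ord0.
Qed.

Lemma alpha_inj (x y : mindex) :
  alpha x i = alpha y i -> alpha x j = alpha y j -> alpha x l = alpha y l -> x = y.
Proof.
move=> eq_i eq_j eq_l.
have : \big[andb/true]_(m < 3) (alpha x m == alpha y m).
  rewrite (big_ord3_edge i_lt3 j_lt3 i_neq_j _ (fun m => alpha x m == alpha y m)).
  by rewrite eq_i eq_j eq_l !eqxx.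
rewrite !big_ord_recr big_ord0 /=; case: x y {eq_i eq_j eq_l} => [[x0 x1] x2] [[y0 y1] y2] /=.
by move=> /andP[/andP[/eqP/val_inj-> /eqP/val_inj->] /eqP/val_inj->].
Qed.

Lemma inD_sum f r al : inD f r al <-> (\sum_(m < 3) (if f m then 0 else al m) <= r)%N.
Proof. by rewrite /inD !big_ord_recr big_ord0 /= add0n; split=> /ssrnat.leP. Qed.

Lemma inD_eface r al : inD (eface i j) r al <-> (al l <= r)%N.
Proof.
have [_ l_neq_i l_neq_j] := l_spec.
rewrite inD_sum (big_ord3_edge i_lt3 j_lt3 i_neq_j _ (fun m => if eface i j m then 0 else al m)).
by rewrite /eface !eqbE !eqxx orbT /= (negbTE l_neq_i) (negbTE l_neq_j).
Qed.

Lemma inD_vface_i r al : inD (vface i) r al <-> (al j + al l <= r)%N.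
Proof.
have [_ l_neq_i _] := l_spec.
rewrite inD_sum (big_ord3_edge i_lt3 j_lt3 i_neq_j _ (fun m => if vface i m then 0 else al m)).
by rewrite /vface !eqbE eqxx (negbTE l_neq_i) eq_sym (negbTE i_neq_j).
Qed.

Lemma inD_vface_j r al : inD (vface j) r al <-> (al i + al l <= r)%N.
Proof.
have [_ _ l_neq_j] := l_spec.
rewrite inD_sum (big_ord3_edge i_lt3 j_lt3 i_neq_j _ (fun m => if vface j m then 0 else al m)).
by rewrite /vface !eqbE eqxx (negbTE l_neq_j) (negbTE i_neq_j) /= addn0.
Qed.

Definition admissible : {pred mindex} := [pred x : mindex |
  [&& (alpha x i + alpha x j + alpha x l == k)%N, (alpha x l <= r1)%N,
      (r0 < alpha x j + alpha x l)%N & (r0 < alpha x i + alpha x l)%N]].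

Lemma admissibleP (x : mindex) :
  (x.1.1 + x.1.2 + x.2)%N = k -> reflect (Sset i j r0 r1 (alpha x)) (admissible x).
Proof.
move=> sum_k; rewrite /admissible /= -sum_alpha sum_k eqxx /=.
apply: (iffP and3P) => [[le_r1 lt_j lt_i]|[/inD_eface le_r1 not_vertex]].
  split; first exact/inD_eface.
  by case=> [/inD_vface_i|/inD_vface_j]; rewrite leqNgt ?lt_i ?lt_j.
split=> //; rewrite ltnNge; apply/negP => le_r0; apply: not_vertex.
  by left; apply/inD_vface_i.
by right; apply/inD_vface_j.
Qed.

Definition dof_beta (x : mindex) := alpha x l.
Definition dof_a (x : mindex) := (alpha x i - (r0.+1 - dof_beta x))%N.
Definition dof_b (x : mindex) := (alpha x j - (r0.+1 - dof_beta x))%N.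

Lemma admissible_dof (x : mindex) : admissible x ->
  [/\ (dof_beta x <= r1)%N, alpha x i = (dof_a x + (r0.+1 - dof_beta x))%N,
      alpha x j = (dof_b x + (r0.+1 - dof_beta x))%N
    & (dof_a x + dof_b x + 2 * (r0 + 1) = k + dof_beta x)%N].
Proof. by rewrite /dof_a /dof_b /dof_beta => /and4P[/eqP ? ? ? ?]; split; lia. Qed.

Lemma admissible_inj (x y : mindex) : admissible x -> admissible y ->
  dof_beta x = dof_beta y -> dof_b x = dof_b y -> x = y.
Proof.
move=> x_adm y_adm eq_beta eq_b; have [_ _ xj _] := admissible_dof x_adm.
have [_ _ yj _] := admissible_dof y_adm.
move: x_adm y_adm => /and4P[/eqP x_sum _ _ _] /and4P[/eqP y_sum _ _ _].
have eq_j : alpha x j = alpha y j by rewrite xj yj eq_beta eq_b.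
by apply: alpha_inj => //; move: eq_beta; rewrite /dof_beta => eq_l; lia.
Qed.

Lemma dof_index_exists b a c : (b <= r1)%N -> (a + c + 2 * (r0 + 1) = k + b)%N ->
  exists2 x, admissible x & [/\ dof_beta x = b, dof_a x = a & dof_b x = c].
Proof.
move=> b_le sum_eq; have [l_lt3 l_neq_i l_neq_j] := l_spec.
pose e m := if m == i then (a + r0.+1 - b)%N else if m == j then (c + r0.+1 - b)%N else b.
have e_le m : (e m <= k)%N by rewrite /e; case: (m == i); case: (m == j); lia.
pose x : mindex := (inord (e 0%N), inord (e 1%N), inord (e 2%N)).
have alpha_x m : (m < 3)%N -> alpha x m = e m.
  by case: m => [|[|[|?]]] // _; rewrite /alpha /= inordK // ltnS e_le.
have [xi xj xl] : [/\ alpha x i = (a + r0.+1 - b)%N, alpha x j = (c + r0.+1 - b)%N & alpha x l = b].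
  by rewrite !alpha_x // /e eqxx eq_sym (negbTE i_neq_j) eqxx (negbTE l_neq_i) (negbTE l_neq_j).
clearbody x; exists x; last by rewrite /dof_a /dof_b /dof_beta xi xj xl; split; lia.
by apply/and4P; rewrite xi xj xl; split; lia.
Qed.

Definition adm_index := {x in admissible}.

Definition Pk_fun (ch : adm_index -> R) (x : pt) : R :=
  \sum_(y : adm_index) ch y * bmono v (alpha (val y)) x.

Definition Pk_poly (ch : adm_index -> R) : {poly {poly R}} :=
  \sum_(y : adm_index) (ch y)%:P%:P * line_poly (alpha (val y)).

Lemma Pk_fun_normal_restriction ch : normal_restriction (Pk_fun ch) (Pk_poly ch).
Proof.
move=> t s; rewrite /Pk_fun /Pk_poly rmorph_sum horner_sum; apply: eq_bigr => y _.
by rewrite bmono_normal_line // rmorphM /= map_polyC /= horner_evalE hornerC hornerCM.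
Qed.

Definition weight (b : nat) : {poly R} := ((1 - 'X) * 'X) ^+ (r0.+1 - b).

Definition edge_basis (x : mindex) : {poly R} := (1 - 'X) ^+ dof_a x * 'X ^+ dof_b x.

Lemma weight_gt0 b t : 0 < t < 1 -> 0 < (weight b).[t].
Proof.
move=> /andP[t_gt0 t_lt1].
by rewrite /weight horner_exp !hornerE exprn_gt0 // mulr_gt0 // subr_gt0.
Qed.

Lemma Pk_poly_coef ch b : (forall y : adm_index, (dof_beta (val y) < b)%N -> ch y = 0) ->
  (Pk_poly ch)`_b = (dbary v l n ^+ b)%:P *
    (weight b * \sum_(y : adm_index | dof_beta (val y) == b) ch y *: edge_basis (val y)).
Proof.
move=> ch0; rewrite /Pk_poly coef_sum !mulr_sumr [RHS]big_mkcond /=; apply: eq_bigr => y _.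
rewrite coefCM; case: (ltngtP (dof_beta (val y)) b) => [lt_b|gt_b|<-].
- by rewrite ch0 // mul0r.
- by rewrite line_poly_coef_lt // mulr0.
have [_ yi yj _] := admissible_dof (valP y).
rewrite line_poly_coef_normal // yi yj /weight /edge_basis /dof_beta !exprD exprMn -mul_polyC.
ring.
Qed.

Definition dof_map (ch : {ffun adm_index -> R^o}) : {ffun adm_index -> R^o} :=
  [ffun y => int01 ((Pk_poly ch)`_(dof_beta (val y)) * edge_basis (val y))].

Lemma dof_map_is_linear : linear dof_map.
Proof.
move=> a c1 c2; apply/ffunP => y; rewrite !ffunE.
have -> : Pk_poly (a *: c1 + c2) = a%:P%:P * Pk_poly c1 + Pk_poly c2.
  rewrite /Pk_poly mulr_sumr -big_split /=; apply: eq_bigr => x _.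
  by rewrite !ffunE !rmorphD !rmorphM /= mulrDl mulrA.
by rewrite coefD coefCM mulrDl -mulrA mul_polyC linearD linearZ.
Qed.

HB.instance Definition _ :=
  GRing.isLinear.Build R {ffun adm_index -> R^o} {ffun adm_index -> R^o} _ dof_map
    dof_map_is_linear.

Lemma dof_map_eq0 ch : dof_map ch = 0 -> ch = 0.
Proof.
move=> /ffunP dof0; apply/ffunP => y; rewrite ffunE.
suff ch0 b : forall y : adm_index, dof_beta (val y) = b -> ch y = 0 by exact: ch0 _ y erefl.
elim/ltn_ind: b => b IHb.
have ch_lt (z : adm_index) : (dof_beta (val z) < b)%N -> ch z = 0.
  by move=> z_lt; exact: IHb _ z_lt z erefl.
set Q := \sum_(z : adm_index | dof_beta (val z) == b) ch z *: edge_basis (val z).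
have orth (z : adm_index) : dof_beta (val z) == b -> int01 (weight b * Q * edge_basis (val z)) = 0.
  move=> /eqP zb; have /eqP := dof0 z.
  rewrite !ffunE zb Pk_poly_coef // -!mulrA mul_polyC linearZ /= mulf_eq0 expf_eq0.
  have dl_neq0 : dbary v l n != 0 by exact: dbary_third_neq0.
  by rewrite (negbTE dl_neq0) andbF mulrA => /eqP.
have Q0 : Q = 0 by apply: int01_weighted_orth_eq0 (weight_gt0 b) orth.
have e_inj : {in [pred z : adm_index | dof_beta (val z) == b] &, injective (dof_b \o val)}.
  move=> z1 z2 /eqP b1 /eqP b2 eq_b; apply/val_inj/admissible_inj; rewrite ?b1 ?b2 //.
    exact: valP.
  exact: valP.
move=> z zb; apply: (subX_Xn_free (f := dof_a \o val) e_inj Q0).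
by rewrite inE /= zb.
Qed.

Lemma dof_map_surj g : exists ch, dof_map ch = g.
Proof.
have lker0 : lker (linfun dof_map) == 0%VS.
  apply/lker0P => c1 c2; rewrite !lfunE /= => eq_dof.
  by apply/eqP; rewrite -subr_eq0; apply/eqP/dof_map_eq0; rewrite linearB /= eq_dof subrr.
by exists ((linfun dof_map)^-1%VF g); rewrite -{2}(lker0_lfunVK lker0 g) lfunE.
Qed.

Lemma sum_f_R0_mindex (F : nat -> nat -> nat -> R) :
  sum_f_R0 (fun a0 => sum_f_R0 (fun a1 => sum_f_R0 (fun a2 => F a0 a1 a2) k) k) k =
  \sum_(x : mindex) F x.1.1 x.1.2 x.2.
Proof.
rewrite sum_f_R0E big_mkord; under eq_bigr do rewrite sum_f_R0E big_mkord.
under eq_bigr do under eq_bigr do rewrite sum_f_R0E big_mkord.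
by rewrite pair_big /= pair_big.
Qed.

Lemma sum_admissible_Pk_fun (c : mindex -> R) x :
  (forall y : mindex, (y.1.1 + y.1.2 + y.2)%N = k -> ~~ admissible y -> c y = 0) ->
  \sum_(y : mindex) (if Nat.eqb (y.1.1 + y.1.2 + y.2) k then c y * bmono v (alpha y) x else 0) =
  Pk_fun (fun y => c (val y)) x.
Proof.
move=> c0; rewrite /Pk_fun -(big_sub admissible (fun y => c y * bmono v (alpha y) x)) /=.
rewrite [RHS]big_mkcond; apply: eq_bigr => y _; rewrite eqbE sum_alpha.
have [/and4P[-> _ _ _]|y_nadm] := boolP (y \in admissible); first by [].
by case: eqP => [sum_k|//]; rewrite c0 ?sum_alpha // mul0r.
Qed.

Lemma inPkP u : inPk v k (Sset i j r0 r1) u <-> exists ch : {ffun adm_index -> R^o}, u = Pk_fun ch.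
Proof.
split=> [[c [c0 uE]]|[ch ->]].
  exists [ffun y : adm_index => c (val y).1.1 (val y).1.2 (val y).2].
  apply: functional_extensionality => x; rewrite uE sum_f_R0_mindex.
  rewrite (sum_admissible_Pk_fun (c := fun y => c y.1.1 y.1.2 y.2)).
    by apply: eq_bigr => y _; rewrite ffunE.
  by move=> y sum_k y_nadm; apply: c0 => // /(admissibleP sum_k); apply/negP.
pose c a0 a1 a2 : R := if [&& a0 <= k, a1 <= k & a2 <= k]%N
  then oapp ch 0 (insub ((inord a0, inord a1, inord a2) : mindex)) else 0.
exists c; split=> [a0 a1 a2 sum_k not_S|x].
  rewrite /c; case: and3P => // -[a0_le a1_le a2_le]; rewrite insubF //.
  by apply/negP => /admissibleP; rewrite /alpha /= !inordK ?ltnS // => /(_ sum_k)/not_S.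
rewrite sum_f_R0_mindex sum_admissible_Pk_fun => [|y _ y_nadm].
  apply: eq_bigr => y _; rewrite /c !leq_ord !inord_val /=.
  by rewrite -!surjective_pairing valK.
by rewrite /c !leq_ord !inord_val /= -!surjective_pairing insubF //; apply/negbTE.
Qed.

Lemma dof_Pk_fun (ch : {ffun adm_index -> R^o}) (y : adm_index) :
  dof v i j n (Pk_fun ch) (dof_beta (val y)) (dof_a (val y)) (dof_b (val y)) =
  elen v i j * ((dof_beta (val y))`!%:R * dof_map ch y).
Proof. by rewrite (dof_normal_restriction (Pk_fun_normal_restriction ch)) ffunE. Qed.

Lemma elen_fact_neq0 b : elen v i j * b`!%:R != 0.
Proof. by rewrite mulf_neq0 // gt_eqF ?elen_gt0 // ltr0n fact_gt0. Qed.

Lemma Pk_dof_inj u w : inPk v k (Sset i j r0 r1) u -> inPk v k (Sset i j r0 r1) w ->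
  (forall b a c, (b <= r1)%N -> (a + c + 2 * (r0 + 1) = k + b)%N ->
     dof v i j n u b a c = dof v i j n w b a c) ->
  u = w.
Proof.
move=> /inPkP[cu ->] /inPkP[cw ->] eq_dof.
suff /eqP : cu - cw = 0 by rewrite subr_eq0 => /eqP ->.
apply/dof_map_eq0/ffunP => y.
have [b_le _ _ sum_eq] := admissible_dof (valP y).
move: (eq_dof _ _ _ b_le sum_eq); rewrite !dof_Pk_fun !mulrA => /(mulfI (elen_fact_neq0 _)).
by rewrite linearB !ffunE => ->; rewrite subrr.
Qed.

Lemma Pk_dof_surj g : exists2 u, inPk v k (Sset i j r0 r1) u &
  forall b a c, (b <= r1)%N -> (a + c + 2 * (r0 + 1) = k + b)%N -> dof v i j n u b a c = g b a c.
Proof.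
pose target := [ffun y : adm_index => g (dof_beta (val y)) (dof_a (val y)) (dof_b (val y)) /
  (elen v i j * (dof_beta (val y))`!%:R) : R^o].
have [ch ch_target] := dof_map_surj target.
exists (Pk_fun ch) => [|b a c b_le sum_eq]; first by apply/inPkP; exists ch.
have [x x_adm [<- <- <-]] := dof_index_exists b_le sum_eq.
rewrite -[x]/(val (exist _ x x_adm : adm_index)) dof_Pk_fun ch_target ffunE mulrA.
by rewrite mulrC divfK ?elen_fact_neq0.
Qed.

End Dofs.

End NormalLines.

Theorem mainTheorem10 (r0 r1 k : nat) (v : nat -> pt) (i j : nat) (n : pt) :
  (r1 <= r0)%coq_nat -> (2 * r0 + 1 <= k)%coq_nat ->
  Defs.nondegenerate v -> (i < 3)%coq_nat -> (j < 3)%coq_nat -> i <> j ->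
  unit_normal v i j n ->
  (* injectivity of the dof map on P_k(D(e,r1) \ D(Delta_0(e),r0)) *)
  (forall u w : pt -> R,
     inPk v k (Sset i j r0 r1) u -> inPk v k (Sset i j r0 r1) w ->
     (forall beta a b, (beta <= r1)%coq_nat -> (a + b + 2 * (r0 + 1) = k + beta)%coq_nat ->
        dof v i j n u beta a b = dof v i j n w beta a b) ->
     forall x, u x = w x) /\
  (* surjectivity onto all prescribed values *)
  (forall g : nat -> nat -> nat -> R,
     exists u : pt -> R, inPk v k (Sset i j r0 r1) u /\
       forall beta a b, (beta <= r1)%coq_nat -> (a + b + 2 * (r0 + 1) = k + beta)%coq_nat ->
         dof v i j n u beta a b = g beta a b).
Proof.
move=> /ssrnat.leP r1_le_r0 _ v_nondeg /ssrnat.ltP i_lt3 /ssrnat.ltP j_lt3 /eqP i_neq_j n_normal.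
split=> [u w u_Pk w_Pk eq_dof x|g].
  rewrite (Pk_dof_inj v_nondeg i_lt3 j_lt3 i_neq_j n_normal r1_le_r0 u_Pk w_Pk) //.
  by move=> b a c /ssrnat.leP; apply: eq_dof.
have [u u_Pk u_dof] := Pk_dof_surj v_nondeg i_lt3 j_lt3 i_neq_j k n_normal r1_le_r0 g.
by exists u; split=> // b a c /ssrnat.leP; apply: u_dof.
Qed.
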